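(* Let $G_1$ and $G_2$ be metrizable SIN topological groups and let $A$ be a subgroup of both $G_1$ and $G_2$ whose subspace topologies from $G_1$ and from $G_2$ coincide. Then there exist compatible two-sided invariant metrics $d_1$ on $G_1$ and $d_2$ on $G_2$ and a constant $K>0$ such that $$\tfrac1K d_1(a_1,a_2)\le d_2(a_1,a_2)\le K d_1(a_1,a_2)\quad\text{for all } a_1,a_2\in A.$$ (In fact one can take $K=8$.)
   Context: A topological group is SIN if every neighborhood of the identity contains a neighborhood $V$ of the identity with $gVg^{-1}=V$ for all $g$. A metric is compatible if it induces the group topology; two-sided invariant means $d(gf_1,gf_2)=d(f_1,f_2)=d(f_1g,f_2g)$. *)

From Stdlib Require Import Reals.
Open Scope R_scope.

Record Group := {
  carrier :> Type;
  gmul : carrier -> carrier -> carrier;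
  ginv : carrier -> carrier;
  gone : carrier;
  gmul_assoc : forall x y z, gmul x (gmul y z) = gmul (gmul x y) z;
  gmul_1l : forall x, gmul gone x = x;
  gmul_Vl : forall x, gmul (ginv x) x = gone
}.

Arguments gmul {g} _ _.
Arguments ginv {g} _.
Arguments gone {g}.

Record Topology (T : Type) := {
  is_open : (T -> Prop) -> Prop;
  open_full : is_open (fun _ => True);
  open_inter : forall U V, is_open U -> is_open V ->
                 is_open (fun x => U x /\ V x);
  open_union : forall F : (T -> Prop) -> Prop,
                 (forall U, F U -> is_open U) ->
                 is_open (fun x => exists U, F U /\ U x)
}.

Arguments is_open {T} _ _.

Record TopGroup := {
  tg_group :> Group;
  tg_top : Topology tg_group;
  tg_mul_cont : forall (W : tg_group -> Prop) (x y : tg_group),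
    is_open tg_top W -> W (gmul x y) ->
    exists U V, is_open tg_top U /\ is_open tg_top V /\ U x /\ V y /\
      (forall u v, U u -> V v -> W (gmul u v));
  tg_inv_cont : forall (W : tg_group -> Prop) (x : tg_group),
    is_open tg_top W -> W (ginv x) ->
    exists U, is_open tg_top U /\ U x /\ (forall u, U u -> W (ginv u))
}.

Definition nbhd_one (G : TopGroup) (N : G -> Prop) : Prop :=
  exists U, is_open (tg_top G) U /\ U gone /\ (forall x, U x -> N x).

Definition is_SIN (G : TopGroup) : Prop :=
  forall N : G -> Prop, nbhd_one G N ->
    exists V : G -> Prop, nbhd_one G V /\ (forall x, V x -> N x) /\
      (forall (g y : G),
         (exists v, V v /\ y = gmul (gmul g v) (ginv g)) <-> V y).

Definition is_metric (T : Type) (d : T -> T -> R) : Prop :=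
  (forall x y, 0 <= d x y) /\
  (forall x y, d x y = 0 <-> x = y) /\
  (forall x y, d x y = d y x) /\
  (forall x y z, d x z <= d x y + d y z).

Definition compatible_metric (G : TopGroup) (d : G -> G -> R) : Prop :=
  is_metric G d /\
  forall U : G -> Prop,
    is_open (tg_top G) U <->
    (forall x, U x -> exists eps, 0 < eps /\ forall y, d x y < eps -> U y).

Definition metrizable (G : TopGroup) : Prop :=
  exists d, compatible_metric G d.

Definition two_sided_invariant (G : Group) (d : G -> G -> R) : Prop :=
  forall g f1 f2 : G,
    d (gmul g f1) (gmul g f2) = d f1 f2 /\
    d (gmul f1 g) (gmul f2 g) = d f1 f2.

(* j : A -> G is an injective group homomorphism, i.e. identifies A with a
   subgroup of G. *)
Definition subgroup_embedding (A G : Group) (j : A -> G) : Prop :=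
  (forall a b, j (gmul a b) = gmul (j a) (j b)) /\
  (forall a b, j a = j b -> a = b).

Definition subspace_open (G : TopGroup) (A : Type) (j : A -> G)
  (S : A -> Prop) : Prop :=
  exists U, is_open (tg_top G) U /\ forall a, S a <-> U (j a).

(* Proof idea (Birkhoff-Kakutani with interleaving).  A chain on a group G is a
   sequence G = U 0 ⊇ U 1 ⊇ ... of neighbourhoods of 1, each symmetric and
   conjugation invariant, with U (n+1)^3 ⊆ U n, forming a base at 1 and
   intersecting to {1}.  Giving U n the weight 2^-n and letting rho x be the
   infimum of the total weight of words x = x_1 ... x_k with x_i ∈ U n_i, one
   gets a conjugation invariant norm with x ∈ U m -> rho x <= 2^-m and
   rho x < 2^-m -> x ∈ U m; so d x y = rho (x^-1 y) is a compatible two-sided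
   invariant metric.  In a SIN group every neighbourhood of 1 contains the cube
   of a conjugation invariant one, and since A carries the same topology from
   G1 and G2 the chains on G1 and G2 can be built simultaneously so that their
   traces on A interlace (U1 (n+1) ∩ A ⊆ U2 n and U2 (n+1) ∩ A ⊆ U1 n).
   Interlacing makes the two norms agree on A up to the factor 4. *)
From Stdlib Require Import Reals Lra Lia List Classical ClassicalEpsilon
  FunctionalExtensionality PropExtensionality.
Import ListNotations.
Open Scope R_scope.

Lemma mul_inv_r (G : Group) (x : G) : gmul x (ginv x) = gone.
Proof.
  rewrite <- (gmul_1l G (gmul x (ginv x))), <- (gmul_Vl G (ginv x)) at 1.
  rewrite <- gmul_assoc, (gmul_assoc G (ginv x) x (ginv x)), gmul_Vl, gmul_1l.
  apply gmul_Vl.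
Qed.

Lemma mul_1r (G : Group) (x : G) : gmul x gone = x.
Proof. rewrite <- (gmul_Vl G x), gmul_assoc, mul_inv_r. apply gmul_1l. Qed.

Lemma mul_cancel_l (G : Group) (a x y : G) : gmul a x = gmul a y -> x = y.
Proof.
  intro H. rewrite <- (gmul_1l G x), <- (gmul_1l G y), <- (gmul_Vl G a).
  rewrite <- !gmul_assoc, H. reflexivity.
Qed.

Lemma inv_unique (G : Group) (x y : G) : gmul y x = gone -> y = ginv x.
Proof.
  intro H. rewrite <- (mul_1r G y), <- (mul_inv_r G x), gmul_assoc, H.
  apply gmul_1l.
Qed.

Lemma inv_inv (G : Group) (x : G) : ginv (ginv x) = x.
Proof. symmetry. apply inv_unique, mul_inv_r. Qed.

Lemma inv_one (G : Group) : ginv (@gone G) = gone.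
Proof. symmetry. apply inv_unique, gmul_1l. Qed.

Lemma inv_mul (G : Group) (x y : G) : ginv (gmul x y) = gmul (ginv y) (ginv x).
Proof.
  symmetry. apply inv_unique.
  rewrite <- gmul_assoc, (gmul_assoc G (ginv x) x y), gmul_Vl, gmul_1l.
  apply gmul_Vl.
Qed.

Lemma mul_Vl_cancel (G : Group) (x y : G) : gmul (ginv x) (gmul x y) = y.
Proof. rewrite gmul_assoc, gmul_Vl. apply gmul_1l. Qed.

Lemma mul_Vr_cancel (G : Group) (x y : G) : gmul x (gmul (ginv x) y) = y.
Proof. rewrite gmul_assoc, mul_inv_r. apply gmul_1l. Qed.

Definition is_hom (A G : Group) (j : A -> G) : Prop :=
  forall a b, j (gmul a b) = gmul (j a) (j b).

Lemma hom_one (A G : Group) (j : A -> G) : is_hom A G j -> j gone = gone.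
Proof.
  intro H. apply (mul_cancel_l G (j gone)).
  rewrite <- H, gmul_1l, mul_1r. reflexivity.
Qed.

Lemma hom_inv (A G : Group) (j : A -> G) :
  is_hom A G j -> forall a, j (ginv a) = ginv (j a).
Proof.
  intros H a. apply inv_unique. rewrite <- H, gmul_Vl. apply (hom_one A G j H).
Qed.

Lemma open_local (G : TopGroup) (S : G -> Prop) :
  (forall x, S x -> exists U, is_open (tg_top G) U /\ U x /\ forall y, U y -> S y) ->
  is_open (tg_top G) S.
Proof.
  intro H.
  assert (E : S = (fun x => exists U,
             (fun U => is_open (tg_top G) U /\ forall y, U y -> S y) U /\ U x)).
  { apply functional_extensionality. intro x. apply propositional_extensionality.
    split.
    - intro Sx. destruct (H x Sx) as [U [HU [Ux HS]]]. exists U. tauto.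
    - intros [U [[_ HS] Ux]]. auto. }
  rewrite E. apply open_union. intros U [HU _]. exact HU.
Qed.

Lemma open_translate (G : TopGroup) (O : G -> Prop) (x : G) :
  is_open (tg_top G) O -> O x ->
  exists V, is_open (tg_top G) V /\ V gone /\ forall v, V v -> O (gmul x v).
Proof.
  intros HO Ox. rewrite <- (mul_1r G x) in Ox.
  destruct (tg_mul_cont G O x gone HO Ox) as [U [V [HU [HV [Ux [V1 HM]]]]]].
  exists V. auto.
Qed.

Lemma open_left_translate (G : TopGroup) (N : G -> Prop) (g : G) :
  is_open (tg_top G) N -> is_open (tg_top G) (fun y => N (gmul g y)).
Proof.
  intro HN. apply open_local. intros y Ny.
  destruct (tg_mul_cont G N g y HN Ny) as [U [V [_ [HV [Ug [Vy HM]]]]]].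
  exists V. auto.
Qed.

Lemma open_inv (G : TopGroup) (Q : G -> Prop) :
  is_open (tg_top G) Q -> is_open (tg_top G) (fun x => Q (ginv x)).
Proof.
  intro HQ. apply open_local. intros x Qx.
  destruct (tg_inv_cont G Q x HQ Qx) as [U [HU [Ux HI]]]. exists U. auto.
Qed.

Lemma open_square (G : TopGroup) (O : G -> Prop) :
  is_open (tg_top G) O -> O gone ->
  exists P, is_open (tg_top G) P /\ P gone /\
    forall a b, P a -> P b -> O (gmul a b).
Proof.
  intros HO O1. rewrite <- (gmul_1l G gone) in O1.
  destruct (tg_mul_cont G O gone gone HO O1) as [U [V [HU [HV [U1 [V1 HM]]]]]].
  exists (fun x => U x /\ V x). split; [apply open_inter; auto|].
  split; [auto|]. intros a b [Ua _] [_ Vb]. auto.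
Qed.

Lemma ball_open (G : TopGroup) (d : G -> G -> R) (c : G) (r : R) :
  compatible_metric G d -> is_open (tg_top G) (fun y => d c y < r).
Proof.
  intros [[_ [_ [_ Ht]]] Hc]. apply Hc. intros y Hy.
  exists (r - d c y). split; [lra|]. intros z Hz. specialize (Ht c y z). lra.
Qed.

Lemma nbhd_one_1 (G : TopGroup) (V : G -> Prop) : nbhd_one G V -> V gone.
Proof. intros [U [_ [U1 H]]]. auto. Qed.

Definition good_nbhd (G : TopGroup) (V : G -> Prop) : Prop :=
  nbhd_one G V /\
  (forall g v, V v -> V (gmul (gmul g v) (ginv g))) /\
  (forall v, V v -> V (ginv v)).

Definition cube_in (G : Group) (V W : G -> Prop) : Prop :=
  forall a b c, V a -> V b -> V c -> W (gmul a (gmul b c)).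

Lemma SIN_good_cube_root (G : TopGroup) (O : G -> Prop) :
  is_SIN G -> is_open (tg_top G) O -> O gone ->
  exists V, good_nbhd G V /\ cube_in G V O.
Proof.
  intros hS HO O1.
  destruct (open_square G O HO O1) as [P [HP [P1 HPP]]].
  destruct (open_square G P HP P1) as [Q [HQ [Q1 HQQ]]].
  assert (HQs : nbhd_one G (fun x => Q x /\ Q (ginv x))).
  { exists (fun x => Q x /\ Q (ginv x)).
    split; [apply open_inter; [|apply open_inv]; auto|].
    rewrite inv_one. auto. }
  destruct (hS _ HQs) as [V0 [[U [HU [U1 HUV]]] [HV0Q HV0c]]].
  exists (fun x => V0 x /\ V0 (ginv x)). split; [split; [|split]|].
  - exists (fun x => U x /\ U (ginv x)).
    split; [apply open_inter; [|apply open_inv]; auto|].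
    rewrite inv_one. split; [auto|]. intros x [Ux Uxi]. auto.
  - intros g v [Vv Vvi]. split.
    + apply (proj1 (HV0c g _)). exists v. auto.
    + apply (proj1 (HV0c g _)). exists (ginv v). split; auto.
      rewrite !inv_mul, inv_inv, gmul_assoc. reflexivity.
  - intros v [Vv Vvi]. rewrite inv_inv. auto.
  - intros a b c [Va _] [Vb _] [Vc _]. apply HPP.
    + rewrite <- (mul_1r G a). apply HQQ; [apply HV0Q|]; auto.
    + apply HQQ; apply HV0Q; auto.
Qed.

Lemma half_pos n : 0 < (/2)^n.
Proof. apply pow_lt. lra. Qed.

Lemma half_S n : (/2)^(S n) = /2 * (/2)^n.
Proof. reflexivity. Qed.

Lemma half_anti n m : (n <= m)%nat -> (/2)^m <= (/2)^n.
Proof.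
  intro H. induction H; [lra|]. rewrite half_S. pose proof (half_pos m). lra.
Qed.

Lemma half_small eps : 0 < eps -> exists n, (/2)^n < eps.
Proof.
  intro He. assert (Hh : Rabs (/2) < 1) by (rewrite Rabs_right; lra).
  destruct (pow_lt_1_zero (/2) Hh eps He) as [N HN]. exists N.
  specialize (HN N (le_n N)). rewrite Rabs_right in HN; [auto|left; apply half_pos].
Qed.

Lemma dyadic_bracket r : 0 < r < /2 ->
  exists m, (/2)^(S (S m)) <= r < (/2)^(S m).
Proof.
  intros [Hr0 Hr1].
  destruct (half_small r Hr0) as [n Hn].
  assert (Hex : exists m, r < (/2)^(S m) /\ ~ r < (/2)^(S (S m))).
  { apply NNPP. intro Hno.
    assert (Hall : forall k, r < (/2)^(S k)).
    { induction k as [|k IH]; [simpl; lra|].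
      apply NNPP. intro Hk. apply Hno. exists k. auto. }
    specialize (Hall n). pose proof (half_anti n (S n) (le_S _ _ (le_n n))). lra. }
  destruct Hex as [m [Hm HSm]]. exists m. lra.
Qed.

Lemma le_eps (a b : R) : (forall eps, 0 < eps -> a <= b + eps) -> a <= b.
Proof.
  intro H. destruct (Rle_or_lt a b) as [h|h]; auto. specialize (H ((a - b)/2)). lra.
Qed.

Record nbhd_chain (G : TopGroup) := {
  ch_U : nat -> G -> Prop;
  ch_top : forall x, ch_U 0 x;
  ch_good : forall n, good_nbhd G (ch_U n);
  ch_cube : forall n, cube_in G (ch_U (S n)) (ch_U n);
  ch_base : forall V, is_open (tg_top G) V -> V gone ->
              exists m, forall x, ch_U m x -> V x;
  ch_sep : forall x, (forall n, ch_U n x) -> x = gone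
}.

Arguments ch_U {G} _ _ _.
Arguments ch_top {G} _ _.
Arguments ch_good {G} _ _.
Arguments ch_cube {G} _ _ _ _ _ _ _ _.
Arguments ch_base {G} _ _ _ _.
Arguments ch_sep {G} _ _ _.

Lemma chain_of_shrinking (G : TopGroup) (d : G -> G -> R) (U : nat -> G -> Prop) :
  compatible_metric G d ->
  (forall x, U 0%nat x) -> (forall n, good_nbhd G (U n)) ->
  (forall n, cube_in G (U (S n)) (U n)) ->
  (forall n x, U (S n) x -> d gone x < (/2)^(S n)) ->
  exists C : nbhd_chain G, ch_U C = U.
Proof.
  intros Hd Htop Hgood Hcube Hsmall.
  assert (Hbase : forall V, is_open (tg_top G) V -> V gone ->
                    exists m, forall x, U m x -> V x).
  { intros V HV V1. destruct (proj1 (proj2 Hd V) HV gone V1) as [eps [He Hb]].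
    destruct (half_small eps He) as [N HN]. exists (S N). intros x Hx. apply Hb.
    pose proof (Hsmall N x Hx). pose proof (half_anti N (S N) (le_S _ _ (le_n N))).
    lra. }
  assert (Hsep : forall x, (forall n, U n x) -> x = gone).
  { intros x Hx. destruct Hd as [[Hn [H0 _]] _]. symmetry. apply H0.
    destruct (Rle_or_lt (d gone x) 0) as [h|h]; [specialize (Hn gone x); lra|].
    destruct (half_small _ h) as [n Hn']. pose proof (Hsmall n x (Hx (S n))).
    pose proof (half_anti n (S n) (le_S _ _ (le_n n))). lra. }
  exists (Build_nbhd_chain G U Htop Hgood Hcube Hbase Hsep). reflexivity.
Qed.

Section Pseudonorm.

Variable G : TopGroup.
Variable C : nbhd_chain G.

Lemma ch_one n : ch_U C n gone.
Proof. apply nbhd_one_1, (ch_good C n). Qed.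

Lemma ch_mono n m x : (n <= m)%nat -> ch_U C m x -> ch_U C n x.
Proof.
  intro H. induction H as [|m H IH]; auto. intro Hx. apply IH.
  rewrite <- (mul_1r G x), <- (mul_1r G gone). apply (ch_cube C); auto; apply ch_one.
Qed.

(* A word is a finite list of letters x_i, each tagged with a level n_i; it is
   admissible when x_i lies in U n_i, and its weight is the sum of the
   2^-n_i. *)
Definition word := list (G * nat).

Definition word_prod (l : word) : G :=
  fold_right (fun p acc => gmul (fst p) acc) gone l.

Definition weight (l : word) : R :=
  fold_right (fun p acc => (/2)^(snd p) + acc) 0 l.

Definition admissible (l : word) : Prop :=
  Forall (fun p => ch_U C (snd p) (fst p)) l.

Lemma word_prod_app l1 l2 : word_prod (l1 ++ l2) = gmul (word_prod l1) (word_prod l2).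
Proof.
  induction l1 as [|p l1 IH]; simpl; [rewrite gmul_1l; auto|].
  rewrite IH, gmul_assoc. auto.
Qed.

Lemma weight_app l1 l2 : weight (l1 ++ l2) = weight l1 + weight l2.
Proof. induction l1 as [|p l1 IH]; simpl; [lra|]. rewrite IH. lra. Qed.

Lemma weight_nonneg l : 0 <= weight l.
Proof.
  induction l as [|p l IH]; simpl; [lra|]. pose proof (half_pos (snd p)). lra.
Qed.

Lemma word_split (l : word) (t : R) : l <> [] -> 0 < t ->
  exists l1 x l2, l = l1 ++ x :: l2 /\ weight l1 < t /\
     (t <= weight l1 + (/2)^(snd x) \/ l2 = []).
Proof.
  revert t. induction l as [|y r IH]; intros t Hl Ht; [congruence|].
  destruct (Rle_or_lt t ((/2)^(snd y))) as [h|h].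
  - exists [], y, r. simpl. split; [reflexivity|]. split; [lra|]. left; lra.
  - destruct r as [|z r'].
    + exists [], y, []. simpl. split; [reflexivity|]. split; [lra|]. auto.
    + destruct (IH (t - (/2)^(snd y))) as [r1 [x [r2 [E [W1 W2]]]]];
        [congruence|lra|].
      exists (y :: r1), x, r2. rewrite E. split; [reflexivity|]. simpl.
      split; [lra|]. destruct W2; [left; lra|right; auto].
Qed.

(* Induction on the length: split the word at half its
   weight; both halves have weight < 2^-(m+1) and so does the middle letter. *)
Lemma word_in_level k : forall l m, (length l <= k)%nat -> admissible l ->
  weight l < (/2)^m -> ch_U C m (word_prod l).
Proof.
  induction k as [|k IH]; intros l m Hlen Ha Hw.
  - destruct l; [apply ch_one|simpl in Hlen; lia].
  - destruct l as [|p l']; [apply ch_one|].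
    destruct (word_split (p :: l') ((/2)^(S m))) as [l1 [x [l2 [E [W1 W2]]]]];
      [congruence|apply half_pos|].
    rewrite E in *. rewrite length_app in Hlen. simpl in Hlen.
    apply Forall_app in Ha. destruct Ha as [Ha1 Ha2]. inversion Ha2; subst.
    rewrite weight_app in Hw. simpl in Hw.
    pose proof (weight_nonneg l1). pose proof (weight_nonneg l2).
    rewrite word_prod_app. simpl. apply (ch_cube C).
    + apply IH; auto. lia.
    + apply (ch_mono _ (snd x)); auto.
      destruct (Compare_dec.le_lt_dec (snd x) m) as [h|h]; [|lia].
      pose proof (half_anti _ _ h). lra.
    + destruct W2 as [W2|W2].
      * apply IH; auto; [lia|]. rewrite half_S in *. lra.
      * subst. apply ch_one.
Qed.

(* The pseudo-norm rho x: the infimum of the weights of admissible words with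
   product x (taken as minus the supremum of the negated weights). *)
Definition neg_weights (x : G) : R -> Prop :=
  fun r => exists l, admissible l /\ word_prod l = x /\ r = - weight l.

Lemma neg_weights_bound x : bound (neg_weights x).
Proof.
  exists 0. intros r [l [_ [_ E]]]. pose proof (weight_nonneg l). lra.
Qed.

Lemma neg_weights_inhabited x : exists r, neg_weights x r.
Proof.
  exists (- weight [(x, 0%nat)]). exists [(x, 0%nat)]. split; [|split; auto].
  - constructor; [apply ch_top|constructor].
  - simpl. apply mul_1r.
Qed.

Definition rho (x : G) : R :=
  - proj1_sig (completeness (neg_weights x) (neg_weights_bound x)
                 (neg_weights_inhabited x)).

Lemma rho_spec x : is_lub (neg_weights x) (- rho x).
Proof. unfold rho. rewrite Ropp_involutive. apply proj2_sig. Qed.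

Lemma rho_le x l : admissible l -> word_prod l = x -> rho x <= weight l.
Proof.
  intros Ha Hp. destruct (rho_spec x) as [Hu _].
  assert (- weight l <= - rho x) by (apply Hu; exists l; auto). lra.
Qed.

Lemma rho_approx x eps : 0 < eps ->
  exists l, admissible l /\ word_prod l = x /\ weight l < rho x + eps.
Proof.
  intro He. apply NNPP. intro Hn. destruct (rho_spec x) as [_ Hl].
  assert (- rho x <= - (rho x + eps)); [|lra].
  apply Hl. intros r [l [Ha [Hp E]]]. subst r.
  destruct (Rle_or_lt (rho x + eps) (weight l)); [lra|].
  exfalso. apply Hn. exists l. auto.
Qed.

Lemma rho_nonneg x : 0 <= rho x.
Proof.
  destruct (rho_spec x) as [_ Hl]. assert (- rho x <= 0); [|lra].
  apply Hl. intros r [l [_ [_ E]]]. pose proof (weight_nonneg l). lra.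
Qed.

Lemma rho_one : rho gone = 0.
Proof.
  pose proof (rho_nonneg gone). pose proof (rho_le gone [] (Forall_nil _) eq_refl).
  simpl in *. lra.
Qed.

Lemma rho_level n x : ch_U C n x -> rho x <= (/2)^n.
Proof.
  intro H. pose proof (rho_le x [(x, n)]) as Hle. simpl in Hle.
  rewrite Rplus_0_r in Hle. apply Hle; [constructor; auto|apply mul_1r].
Qed.

Lemma rho_small m x : rho x < (/2)^m -> ch_U C m x.
Proof.
  intro H. destruct (rho_approx x ((/2)^m - rho x)) as [l [Ha [Hp Hw]]]; [lra|].
  subst x. apply (word_in_level (length l)); auto. lra.
Qed.

Lemma rho_zero x : rho x = 0 -> x = gone.
Proof.
  intro H. apply (ch_sep C). intro n. apply rho_small. rewrite H. apply half_pos.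
Qed.

Lemma rho_mul x y : rho (gmul x y) <= rho x + rho y.
Proof.
  apply le_eps. intros eps He.
  destruct (rho_approx x (eps/2)) as [l1 [Ha1 [Hp1 Hw1]]]; [lra|].
  destruct (rho_approx y (eps/2)) as [l2 [Ha2 [Hp2 Hw2]]]; [lra|].
  pose proof (rho_le (gmul x y) (l1 ++ l2)) as Hle. rewrite weight_app in Hle.
  assert (rho (gmul x y) <= weight l1 + weight l2); [|lra].
  apply Hle; [apply Forall_app; auto|]. rewrite word_prod_app. subst. auto.
Qed.

Lemma rho_transfer x y :
  (forall l, admissible l -> word_prod l = x ->
     exists l', admissible l' /\ word_prod l' = y /\ weight l' <= weight l) ->
  rho y <= rho x.
Proof.
  intro H. apply le_eps. intros eps He.
  destruct (rho_approx x eps He) as [l [Ha [Hp Hw]]].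
  destruct (H l Ha Hp) as [l' [Ha' [Hp' Hw']]].
  pose proof (rho_le y l' Ha' Hp'). lra.
Qed.

(* Inverting a word (reversed order, inverted letters) keeps it admissible
   since the U n are symmetric. *)
Lemma rho_inv_le x : rho (ginv x) <= rho x.
Proof.
  apply rho_transfer. intros l Ha Hp.
  exists (rev (map (fun p => (ginv (fst p), snd p)) l)). subst x.
  induction l as [|p r IH]; simpl.
  - split; [constructor|]. split; [symmetry; apply inv_one|lra].
  - inversion Ha as [|? ? Hp Hr]; subst. destruct (IH Hr) as [Ha' [Hp' Hw']].
    split; [|split].
    + apply Forall_app. split; auto. constructor; [|constructor].
      apply (ch_good C). auto.
    + rewrite word_prod_app, Hp', inv_mul. simpl. rewrite mul_1r. auto.
    + rewrite weight_app. simpl. lra.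
Qed.

Lemma rho_inv x : rho (ginv x) = rho x.
Proof.
  apply Rle_antisym; [apply rho_inv_le|].
  rewrite <- (inv_inv G x) at 1. apply rho_inv_le.
Qed.

(* Conjugating every letter keeps a word admissible since the U n are
   conjugation invariant. *)
Lemma rho_conj_le g x : rho (gmul (gmul g x) (ginv g)) <= rho x.
Proof.
  apply rho_transfer. intros l Ha Hp.
  exists (map (fun p => (gmul (gmul g (fst p)) (ginv g), snd p)) l). subst x.
  induction l as [|p r IH]; simpl.
  - split; [constructor|]. split; [rewrite mul_1r; symmetry; apply mul_inv_r|lra].
  - inversion Ha as [|? ? Hp Hr]; subst. destruct (IH Hr) as [Ha' [Hp' Hw']].
    split; [|split].
    + constructor; auto. apply (ch_good C). auto.
    + rewrite Hp', <- !gmul_assoc, mul_Vl_cancel. auto.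
    + lra.
Qed.

Lemma rho_conj g x : rho (gmul (gmul (ginv g) x) g) = rho x.
Proof.
  apply Rle_antisym.
  - pose proof (rho_conj_le (ginv g) x) as H. rewrite inv_inv in H. auto.
  - pose proof (rho_conj_le g (gmul (gmul (ginv g) x) g)) as H.
    rewrite <- !gmul_assoc, mul_Vr_cancel, mul_inv_r, mul_1r, gmul_assoc in H. exact H.
Qed.

End Pseudonorm.

Arguments rho {G} _ _.

Definition chain_dist {G : TopGroup} (C : nbhd_chain G) (x y : G) : R :=
  rho C (gmul (ginv x) y).

Lemma chain_dist_metric (G : TopGroup) (C : nbhd_chain G) :
  is_metric G (chain_dist C).
Proof.
  unfold chain_dist. split; [|split; [|split]].
  - intros. apply rho_nonneg.
  - intros x y. split.
    + intro H. apply rho_zero in H. rewrite <- (mul_Vr_cancel G x y), H, mul_1r. auto.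
    + intro H. subst. rewrite gmul_Vl. apply rho_one.
  - intros x y. rewrite <- rho_inv, inv_mul, inv_inv. auto.
  - intros x y z.
    replace (gmul (ginv x) z) with (gmul (gmul (ginv x) y) (gmul (ginv y) z)).
    + apply rho_mul.
    + rewrite <- gmul_assoc, mul_Vr_cancel. auto.
Qed.

(* The balls of chain_dist around x are squeezed between the translates
   x U m, so the metric induces the topology of G. *)
Lemma chain_dist_compatible (G : TopGroup) (C : nbhd_chain G) :
  compatible_metric G (chain_dist C).
Proof.
  split; [apply chain_dist_metric|]. unfold chain_dist. intro U. split.
  - intros HU x Ux. destruct (open_translate G U x HU Ux) as [V [HV [V1 HVU]]].
    destruct (ch_base C V HV V1) as [m Hm].
    exists ((/2)^m). split; [apply half_pos|]. intros y Hy.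
    rewrite <- (mul_Vr_cancel G x y). apply HVU, Hm, rho_small. auto.
  - intro H. apply open_local. intros x Ux.
    destruct (H x Ux) as [eps [He Hb]]. destruct (half_small eps He) as [m Hm].
    destruct (proj1 (ch_good C m)) as [N [HN [N1 HNU]]].
    exists (fun y => N (gmul (ginv x) y)). split; [|split].
    + apply open_left_translate. auto.
    + rewrite gmul_Vl. auto.
    + intros y Ny. apply Hb. pose proof (rho_level G C m _ (HNU _ Ny)). lra.
Qed.

(* Left invariance is built in; right invariance is conjugation invariance
   of rho. *)
Lemma chain_dist_invariant (G : TopGroup) (C : nbhd_chain G) :
  two_sided_invariant G (chain_dist C).
Proof.
  unfold chain_dist. intros g f1 f2. split.
  - rewrite inv_mul, <- gmul_assoc, mul_Vl_cancel. auto.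
  - rewrite inv_mul, <- gmul_assoc, (gmul_assoc _ (ginv f1) f2 g), gmul_assoc.
    apply rho_conj.
Qed.

Lemma rho_compare (G1 G2 : TopGroup) (C1 : nbhd_chain G1) (C2 : nbhd_chain G2)
  (x1 : G1) (x2 : G2) :
  (forall n, ch_U C1 (S n) x1 -> ch_U C2 n x2) -> rho C2 x2 <= 4 * rho C1 x1.
Proof.
  intro Ht. pose proof (rho_nonneg G1 C1 x1) as Hn1.
  destruct (Req_dec (rho C1 x1) 0) as [h|h].
  - assert (Hx2 : x2 = gone).
    { apply (ch_sep C2). intro n. apply Ht, (rho_small G1 C1). rewrite h.
      apply half_pos. }
    rewrite Hx2, rho_one. lra.
  - destruct (Rlt_or_le (rho C1 x1) (/2)) as [h0|h0].
    + destruct (dyadic_bracket (rho C1 x1)) as [m [Hlo Hhi]]; [lra|].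
      pose proof (rho_level G2 C2 m x2 (Ht m (rho_small G1 C1 (S m) x1 Hhi))).
      rewrite !half_S in Hlo. lra.
    + pose proof (rho_level G2 C2 0 x2 (ch_top C2 x2)). simpl in *. lra.
Qed.

Lemma chain_dist_compare (A : Group) (G1 G2 : TopGroup) (j1 : A -> G1) (j2 : A -> G2)
  (C1 : nbhd_chain G1) (C2 : nbhd_chain G2) :
  is_hom A G1 j1 -> is_hom A G2 j2 ->
  (forall n a, ch_U C1 (S n) (j1 a) -> ch_U C2 n (j2 a)) ->
  forall a1 a2, chain_dist C2 (j2 a1) (j2 a2) <= 4 * chain_dist C1 (j1 a1) (j1 a2).
Proof.
  intros hj1 hj2 Ht a1 a2. unfold chain_dist.
  rewrite <- (hom_inv _ _ _ hj1), <- hj1, <- (hom_inv _ _ _ hj2), <- hj2.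
  apply rho_compare. intro n. apply Ht.
Qed.

Lemma good_nbhd_step (A : Group) (Ga Gb : TopGroup) (ja : A -> Ga) (jb : A -> Gb)
  (d : Ga -> Ga -> R) (r : R) (Va : Ga -> Prop) (Vb : Gb -> Prop) :
  is_SIN Ga -> compatible_metric Ga d -> 0 < r ->
  nbhd_one Ga Va -> nbhd_one Gb Vb -> ja gone = gone -> jb gone = gone ->
  (forall S, subspace_open Gb A jb S -> subspace_open Ga A ja S) ->
  exists V, good_nbhd Ga V /\ cube_in Ga V Va /\
    (forall x, V x -> d gone x < r) /\ (forall a, V (ja a) -> Vb (jb a)).
Proof.
  intros hS Hd hr [Oa [HOa [Oa1 HOaV]]] [Ob [HOb [Ob1 HObV]]] hja hjb ht.
  destruct (ht (fun a => Ob (jb a))) as [O' [HO' HO'e]];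
    [exists Ob; split; [auto|tauto]|].
  assert (O'1 : O' gone) by (rewrite <- hja; apply HO'e; rewrite hjb; auto).
  assert (Hd0 : d gone gone = 0) by (apply (proj1 (proj2 (proj1 Hd))); auto).
  destruct (SIN_good_cube_root Ga (fun x => (Oa x /\ O' x) /\ d gone x < r) hS)
    as [V [HV Hcube]].
  - apply open_inter; [apply open_inter; auto|]. apply ball_open. auto.
  - rewrite Hd0. auto.
  - assert (HVO : forall x, V x -> (Oa x /\ O' x) /\ d gone x < r).
    { intros x Vx. pose proof (nbhd_one_1 _ _ (proj1 HV)) as V1.
      pose proof (Hcube x gone gone Vx V1 V1) as Hx. rewrite !mul_1r in Hx. exact Hx. }
    exists V. split; [auto|split; [|split]].
    + intros a b c Va' Vb' Vc'. apply HOaV, Hcube; auto.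
    + intros x Vx. apply HVO. auto.
    + intros a Va'. apply HObV, HO'e, HVO. auto.
Qed.

Lemma dependent_choice {X : Type} (good : X -> Prop) (Rl : nat -> X -> X -> Prop) (x0 : X) :
  good x0 -> (forall n x, good x -> exists y, good y /\ Rl n x y) ->
  exists f : nat -> X, f 0%nat = x0 /\ forall n, good (f n) /\ Rl n (f n) (f (S n)).
Proof.
  intros H0 H.
  pose (step := fun n (s : {x | good x}) =>
    let e := constructive_indefinite_description _ (H n (proj1_sig s) (proj2_sig s)) in
    exist good (proj1_sig e) (proj1 (proj2_sig e))).
  pose (g := fix g (n : nat) : {x | good x} :=
    match n with 0%nat => exist good x0 H0 | S k => step k (g k) end).
  exists (fun n => proj1_sig (g n)). split; [reflexivity|].
  intro n. split; [apply proj2_sig|].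
  change (g (S n)) with (step n (g n)). unfold step. simpl.
  destruct (constructive_indefinite_description _ _) as [y Hy]. apply Hy.
Qed.

Lemma nbhd_one_full (G : TopGroup) : nbhd_one G (fun _ => True).
Proof. exists (fun _ => True). split; [apply open_full|auto]. Qed.

Lemma good_nbhd_full (G : TopGroup) : good_nbhd G (fun _ => True).
Proof. split; [apply nbhd_one_full|auto]. Qed.

Lemma interleaved_chains (G1 G2 : TopGroup) (A : Group) (j1 : A -> G1) (j2 : A -> G2) :
  metrizable G1 -> metrizable G2 -> is_SIN G1 -> is_SIN G2 ->
  is_hom A G1 j1 -> is_hom A G2 j2 ->
  (forall S, subspace_open G1 A j1 S <-> subspace_open G2 A j2 S) ->
  exists (C1 : nbhd_chain G1) (C2 : nbhd_chain G2),
    (forall n a, ch_U C1 (S n) (j1 a) -> ch_U C2 n (j2 a)) /\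
    (forall n a, ch_U C2 (S n) (j2 a) -> ch_U C1 n (j1 a)).
Proof.
  intros [d1 Hd1] [d2 Hd2] hS1 hS2 hm1 hm2 htop.
  pose proof (hom_one _ _ _ hm1) as h1. pose proof (hom_one _ _ _ hm2) as h2.
  set (good := fun p : (G1 -> Prop) * (G2 -> Prop) =>
    good_nbhd G1 (fst p) /\ good_nbhd G2 (snd p)).
  set (Rl := fun n (p q : (G1 -> Prop) * (G2 -> Prop)) =>
    (cube_in G1 (fst q) (fst p) /\ (forall x, fst q x -> d1 gone x < (/2)^(S n)) /\
     (forall a, fst q (j1 a) -> snd p (j2 a))) /\
    (cube_in G2 (snd q) (snd p) /\ (forall x, snd q x -> d2 gone x < (/2)^(S n)) /\
     (forall a, snd q (j2 a) -> fst p (j1 a)))).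
  destruct (dependent_choice good Rl (fun _ => True, fun _ => True)) as [f [f0 Hf]].
  - split; apply good_nbhd_full.
  - intros n [V W] [HV HW]. simpl in *.
    destruct (good_nbhd_step A G1 G2 j1 j2 d1 ((/2)^(S n)) V W hS1 Hd1 (half_pos _)
      (proj1 HV) (proj1 HW) h1 h2 (fun S => proj2 (htop S))) as [V' HV'].
    destruct (good_nbhd_step A G2 G1 j2 j1 d2 ((/2)^(S n)) W V hS2 Hd2 (half_pos _)
      (proj1 HW) (proj1 HV) h2 h1 (fun S => proj1 (htop S))) as [W' HW'].
    exists (V', W'). unfold good, Rl; simpl. tauto.
  - unfold good, Rl in Hf.
    destruct (chain_of_shrinking G1 d1 (fun n => fst (f n)) Hd1) as [C1 E1].
    { rewrite f0. simpl. auto. }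
    1-3: intro n; apply Hf.
    destruct (chain_of_shrinking G2 d2 (fun n => snd (f n)) Hd2) as [C2 E2].
    { rewrite f0. simpl. auto. }
    1-3: intro n; apply Hf.
    exists C1, C2. rewrite E1, E2. split; intro n; apply Hf.
Qed.

Theorem mainTheorem7
  (G1 G2 : TopGroup) (A : Group) (j1 : A -> G1) (j2 : A -> G2)
  (hG1m : metrizable G1) (hG2m : metrizable G2)
  (hG1s : is_SIN G1) (hG2s : is_SIN G2)
  (hj1 : subgroup_embedding A G1 j1) (hj2 : subgroup_embedding A G2 j2)
  (htop : forall S : A -> Prop,
            subspace_open G1 A j1 S <-> subspace_open G2 A j2 S) :
  exists (d1 : G1 -> G1 -> R) (d2 : G2 -> G2 -> R) (K : R),
    compatible_metric G1 d1 /\ two_sided_invariant G1 d1 /\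
    compatible_metric G2 d2 /\ two_sided_invariant G2 d2 /\
    0 < K /\
    forall a1 a2 : A,
      (1 / K) * d1 (j1 a1) (j1 a2) <= d2 (j2 a1) (j2 a2) /\
      d2 (j2 a1) (j2 a2) <= K * d1 (j1 a1) (j1 a2).
Proof.
  destruct hj1 as [hm1 _]. destruct hj2 as [hm2 _].
  destruct (interleaved_chains G1 G2 A j1 j2 hG1m hG2m hG1s hG2s hm1 hm2 htop)
    as [C1 [C2 [H12 H21]]].
  exists (chain_dist C1), (chain_dist C2), 4.
  split; [apply chain_dist_compatible|]. split; [apply chain_dist_invariant|].
  split; [apply chain_dist_compatible|]. split; [apply chain_dist_invariant|].
  split; [lra|]. intros a1 a2.
  pose proof (chain_dist_compare A G2 G1 j2 j1 C2 C1 hm2 hm1 H21 a1 a2).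
  pose proof (chain_dist_compare A G1 G2 j1 j2 C1 C2 hm1 hm2 H12 a1 a2).
  split; lra.
Qed.
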